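(* Let $\varphi\in\mathcal{M}$ be a matching. Then there exists a matching mechanism that is resolute, $\langle\varphi\rangle$-symmetric and weakly Pareto optimal.
   Context: Fix $n\ge 2$, $W=\{1,\dots,n\}$ (women), $M=\{n+1,\dots,2n\}$ (men), $I=W\cup M$. Permutations compose right-to-left. A preference profile is a function $p$ on $I$ assigning to each $x\in W$ a linear order $p(x)$ on $M$ and to each $y\in M$ a linear order $p(y)$ on $W$; $\mathcal{P}$ is the set of preference profiles. A matching is a permutation $\mu$ of $I$ with $\mu(W)=M$, $\mu(M)=W$ and $\mu(\mu(z))=z$ for all $z\in I$; $\mathcal{M}$ is the set of matchings. $\mu$ is weakly Pareto optimal for $p$ if there is no $\mu'\in\mathcal{M}$ with $\mu'(z)\succ_{p(z)}\mu(z)$ for every $z\in I$. Let $G^*=\{\psi\in\mathrm{Sym}(I):\{\psi(W),\psi(M)\}=\{W,M\}\}$. For a linear order $R$ on $X\subseteq I$ and $\psi\in\mathrm{Sym}(I)$, $\psi R$ is the relation on $\psi(X)$ with $(a,b)\in\psi R$ iff $(\psi^{-1}(a),\psi^{-1}(b))\in R$. For $p\in\mathcal{P}$, $\psi\in G^*$, $p^\psi(z)=\psi\,p(\psi^{-1}(z))$. For a permutation $\mu$, $\mu^\psi=\psi\mu\psi^{-1}$; $S^\psi=\{\mu^\psi:\mu\in S\}$. A matching mechanism is a correspondence $F$ from $\mathcal{P}$ to $\mathcal{M}$; it is resolute if $|F(p)|=1$ for all $p$; weakly Pareto optimal if every element of $F(p)$ is weakly Pareto optimal for $p$, for all $p$;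 for $U\subseteq G^*$ it is $U$-symmetric if $F(p^\psi)=F(p)^\psi$ for all $p\in\mathcal{P}$, $\psi\in U$. $\langle\varphi\rangle=\{id_I,\varphi\}$ is the group generated by $\varphi$. *)

From mathcomp Require Import all_boot fingroup perm.
Set Implicit Arguments. Unset Strict Implicit. Unset Printing Implicit Defensive.
Local Open Scope group_scope.

(* Agents: I = 'I_(n+n); women W = {0,...,n-1}, men M = {n,...,2n-1}
   (0-based shift of the paper's {1..n} and {n+1..2n}). *)
Notation agent n := (ordinal (n + n)).
Definition women (n : nat) : {set agent n} := [set i : agent n | i < n].
Definition men (n : nat) : {set agent n} := [set i : agent n | n <= i].

Definition other_side n (z : agent n) : {set agent n} :=
  if z \in women n then men n else women n.

(* R is a (strict) linear order on X : a relation supported on X x X that is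
   irreflexive, transitive and total on X.  "a R b" reads "a is preferred to b". *)
Definition linear_order_on (T : finType) (X : {set T}) (R : rel T) : Prop :=
  [/\ forall a b, R a b -> (a \in X) && (b \in X),
      forall a, ~~ R a a,
      forall a b c, R a b -> R b c -> R a c &
      forall a b, a \in X -> b \in X -> a != b -> R a b || R b a].

Definition profile n (p : agent n -> rel (agent n)) : Prop :=
  forall z, linear_order_on (other_side z) (p z).

Definition matching n (mu : {perm agent n}) : Prop :=
  [/\ mu @: women n = men n, mu @: men n = women n &
      forall z, mu (mu z) = z].

Definition matchings n : {set {perm agent n}} :=
  [set mu : {perm agent n} | [&& mu @: women n == men n, mu @: men n == women n &
               [forall z, mu (mu z) == z]]].

Definition weakly_pareto_optimal n (p : agent n -> rel (agent n))
  (mu : {perm agent n}) : Prop :=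
  ~ exists mu' : {perm agent n}, matching mu' /\ forall z, p z (mu' z) (mu z).

Definition Gstar n : {set {perm agent n}} :=
  [set psi : {perm agent n} | [set psi @: women n; psi @: men n] == [set women n; men n]].

Definition profile_act n (p : agent n -> rel (agent n)) (psi : {perm agent n})
  : agent n -> rel (agent n) :=
  fun z a b => p ((psi^-1)%g z) ((psi^-1)%g a) ((psi^-1)%g b).

(* Matching mechanisms: F p is the set of matchings selected at p
   (only its values on genuine profiles matter). *)
Definition mechanism n (F : (agent n -> rel (agent n)) -> {set {perm agent n}})
  : Prop := forall p, profile p -> F p \subset matchings n.

Definition resolute n (F : (agent n -> rel (agent n)) -> {set {perm agent n}})
  : Prop := forall p, profile p -> #|F p| = 1%N.

Definition mech_weakly_pareto_optimal n
  (F : (agent n -> rel (agent n)) -> {set {perm agent n}}) : Prop :=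
  forall p, profile p -> forall mu, mu \in F p -> weakly_pareto_optimal p mu.

(* mu^psi = psi mu psi^-1 is mathcomp conjugation  mu ^ psi  (= psi^-1 * mu * psi
   with mathcomp's left-to-right composition), and S^psi = S :^ psi. *)
Definition mech_symmetric n (U : {set {perm agent n}})
  (F : (agent n -> rel (agent n)) -> {set {perm agent n}}) : Prop :=
  forall p, profile p -> forall psi, psi \in U ->
    F (profile_act p psi) = (F p) :^ psi.

From mathcomp Require Import all_boot fingroup perm.
Set Implicit Arguments. Unset Strict Implicit. Unset Printing Implicit Defensive.
Local Open Scope group_scope.

(* The mechanism selects, at each profile, a fixed choice among the matchings
   that commute with phi and are weakly Pareto optimal.  Such a matching always
   exists: conjugating phi by the transposition of the men phi(w) and m, where
   m is the favourite of some woman w, yields a phi-invariant matching in which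
   w gets her top choice.  Relabelling a profile by psi in <phi> conjugates
   the candidate set by psi, which fixes it because its elements commute with
   phi; hence any fixed choice from it is <phi>-symmetric. *)

Lemma linear_order_top (T : finType) (X : {set T}) (R : rel T) x0 :
  linear_order_on X R -> x0 \in X -> exists2 m, m \in X & forall y, ~~ R y m.
Proof.
case=> R_sub R_irr R_trans _ Xx0.
have [m Xm m_max] := @arg_maxnP _ x0 [in X] (fun x => #|[set y | R x y]|) Xx0.
exists m => // y; apply/negP => Rym.
have /andP[Xy _] := R_sub _ _ Rym.
apply/negP: (m_max y Xy); rewrite -ltnNge; apply: proper_card; apply/properP.
split; first by apply/subsetP => z; rewrite !inE; apply: R_trans.
by exists m; rewrite !inE ?Rym ?R_irr.
Qed.

Lemma commute_conjg_involution (gT : finGroupType) (x y : gT) :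
  x^-1 = x -> y^-1 = y -> commute y (y ^ x) -> commute (x ^ y) x.
Proof. by rewrite /commute !conjgE => -> ->; rewrite !mulgA. Qed.

Lemma conjsg_centralised (gT : finGroupType) (A : {set gT}) x y :
  A \subset 'C[x] -> y \in [set 1; x] -> A :^ y = A.
Proof.
move=> cAx /set2P[-> | ->]; first exact: conjsg1.
by apply/normP; apply: (subsetP (cent_sub A)); rewrite -sub_cent1.
Qed.

Lemma permJE (T : finType) (s t : {perm T}) x : (s ^ t) x = t (s (t^-1 x)).
Proof. by rewrite -{1}(permKV t x) permJ. Qed.

Lemma inv_perm_involutive (T : finType) (s : {perm T}) : involutive s -> s^-1 = s.
Proof. by move=> sK; apply/permP => x; rewrite -{1}(sK x) permK. Qed.

Definition pick_set (T : finType) (A : {set T}) : {set T} :=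
  if [pick x in A] is Some x then [set x] else set0.

Lemma pick_set_sub (T : finType) (A : {set T}) : pick_set A \subset A.
Proof. by rewrite /pick_set; case: pickP => [x Ax | _]; rewrite ?sub1set ?sub0set. Qed.

Lemma card_pick_set (T : finType) (A : {set T}) x : x \in A -> #|pick_set A| = 1%N.
Proof.
by move=> Ax; rewrite /pick_set; case: pickP => [y _ | /(_ x)]; rewrite ?cards1 ?Ax.
Qed.

Section Matchings.

Variable n : nat.
Implicit Types (mu nu phi psi : {perm agent n}) (p : agent n -> rel (agent n)).

Definition shifts_sides (b : bool) psi := forall z, (psi z < n) = b (+) (z < n).

Lemma shifts_sides1 : shifts_sides false 1.
Proof. by move=> z; rewrite perm1. Qed.

Lemma shifts_sidesV b psi : shifts_sides b psi -> shifts_sides b psi^-1.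
Proof. by move=> psi_b z; rewrite -{2}(permKV psi z) psi_b addbA addbb. Qed.

Lemma shifts_sides_tperm (x y : agent n) :
  n <= x -> n <= y -> shifts_sides false (tperm x y).
Proof.
rewrite leqNgt => /negbTE x_man; rewrite leqNgt => /negbTE y_man z.
by case: tpermP => [-> | -> |] /=; rewrite ?x_man ?y_man.
Qed.

Lemma matchingsP mu :
  reflect (shifts_sides true mu /\ involutive mu) (mu \in matchings n).
Proof.
rewrite inE; apply: (iffP and3P) => [[/eqP EW /eqP EM /forallP muK] | [mu_t muK]].
  split=> z; last exact/eqP.
  have [z_woman | z_man] := ltnP z n.
    have : mu z \in mu @: women n by rewrite imset_f ?inE.
    by rewrite EW inE leqNgt => /negbTE.
  have : mu z \in mu @: men n by rewrite imset_f ?inE.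
  by rewrite EM inE.
rewrite !(can_imset_pre _ muK); split; last by apply/forallP => z; rewrite muK.
  by apply/eqP/setP => z; rewrite !inE mu_t addTb -leqNgt.
by apply/eqP/setP => z; rewrite !inE leqNgt mu_t addTb negbK.
Qed.

Lemma matchingE mu : matching mu <-> mu \in matchings n.
Proof.
rewrite inE; split => [[-> -> muK] | /and3P[/eqP EW /eqP EM /forallP muK]].
  by rewrite !eqxx; apply/forallP => z; rewrite muK.
by split => // z; apply/eqP.
Qed.

Lemma matchingsJ b psi mu :
  shifts_sides b psi -> (mu ^ psi \in matchings n) = (mu \in matchings n).
Proof.
have conj_matching b' psi' nu : shifts_sides b' psi' ->
    nu \in matchings n -> nu ^ psi' \in matchings n.
  move=> psi_b /matchingsP[nu_t nuK]; apply/matchingsP.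
  by split=> z; rewrite -(permKV psi' z) !permJ ?nuK // !psi_b nu_t addbCA.
move=> psi_b; apply/idP/idP; last exact: conj_matching psi_b.
by move/(conj_matching _ _ _ (shifts_sidesV psi_b)); rewrite conjgK.
Qed.

Definition weakly_pareto_optimalb p mu :=
  ~~ [exists mu' in matchings n, [forall z, p z (mu' z) (mu z)]].

Lemma weakly_pareto_optimalP p mu :
  reflect (weakly_pareto_optimal p mu) (weakly_pareto_optimalb p mu).
Proof.
apply: (iffP negP) => [no_impr [mu' [/matchingE mu'M impr]] | wpo /existsP[mu']].
  by apply: no_impr; apply/existsP; exists mu'; rewrite mu'M; apply/forallP.
by case/andP => /matchingE mu'M /forallP impr; apply: wpo; exists mu'.
Qed.

Lemma weakly_pareto_optimalbJ b psi p mu : shifts_sides b psi ->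
  weakly_pareto_optimalb (profile_act p psi) (mu ^ psi) = weakly_pareto_optimalb p mu.
Proof.
move=> psi_b; congr negb; apply/existsP/existsP => -[mu' /andP[mu'M /forallP impr]].
  exists (mu' ^ psi^-1); rewrite (matchingsJ _ (shifts_sidesV psi_b)) mu'M.
  apply/forallP => z; have := impr (psi z).
  by rewrite /profile_act permJ !permK permJE invgK.
exists (mu' ^ psi); rewrite (matchingsJ _ psi_b) mu'M.
by apply/forallP => z; rewrite /profile_act !permJE !permK.
Qed.

Definition invariant_optimal_matchings phi p : {set {perm agent n}} :=
  [set mu in matchings n :&: 'C[phi] | weakly_pareto_optimalb p mu].

Lemma in_invariant_optimal_matchings phi p mu :
  (mu \in invariant_optimal_matchings phi p)
    = [&& mu \in matchings n, mu \in 'C[phi] & weakly_pareto_optimalb p mu].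
Proof. by rewrite in_set in_setI andbA. Qed.

Lemma invariant_optimal_matchings_sub phi p :
  invariant_optimal_matchings phi p \subset matchings n :&: 'C[phi].
Proof.
by apply/subsetP => mu; rewrite in_invariant_optimal_matchings in_setI => /and3P[-> ->].
Qed.

Lemma invariant_optimal_matchingsJ b phi psi p :
  shifts_sides b psi -> commute psi phi ->
  invariant_optimal_matchings phi (profile_act p psi)
    = invariant_optimal_matchings phi p :^ psi.
Proof.
move=> psi_b psi_phi; have phiJ : phi ^ psi = phi by rewrite conjgE -psi_phi mulKg.
apply/setP => mu; rewrite mem_conjg -{1}(conjgKV psi mu); move: (mu ^ psi^-1) => nu.
rewrite !in_invariant_optimal_matchings (matchingsJ _ psi_b).
by rewrite -{1}phiJ cent1J memJ_conjg (weakly_pareto_optimalbJ _ _ psi_b).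
Qed.

Lemma matching_conj_tperm phi (w m : agent n) :
  phi \in matchings n -> w < n -> n <= m ->
  [/\ phi ^ tperm (phi w) m \in matchings n, phi ^ tperm (phi w) m \in 'C[phi]
    & (phi ^ tperm (phi w) m) w = m].
Proof.
move=> /matchingsP[phi_t phiK] w_woman m_man.
have men_women (x y : agent n) : n <= x -> y < n -> x <> y.
  by move=> x_man y_woman exy; move: x_man; rewrite exy leqNgt y_woman.
have a_man : n <= phi w by rewrite leqNgt phi_t w_woman.
have phim_woman : phi m < n by rewrite phi_t ltnNge m_man.
have w_fixed : tperm (phi w) m w = w by apply: tpermD; apply/eqP; apply: men_women.
split.
- by rewrite (matchingsJ _ (shifts_sides_tperm a_man m_man)); apply/matchingsP.
- apply/cent1P/commute_conjg_involution; rewrite ?tpermV ?inv_perm_involutive //.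
  (* The conjugate transposition moves only women, the original one only men. *)
  rewrite tpermJ phiK; apply: perm_onC (tperm_on _ _) (tperm_on _ _) _.
  rewrite disjoint_subset; apply/subsetP => z /set2P[]-> ;
    by apply/negP => /set2P[]; apply: men_women.
- by move: (permJ phi (tperm (phi w) m) w); rewrite w_fixed tpermL.
Qed.

Lemma invariant_optimal_matching_exists phi p :
  0 < n -> phi \in matchings n -> profile p ->
  exists mu, mu \in invariant_optimal_matchings phi p.
Proof.
move=> n_gt0 phiM p_prof.
pose w : agent n := Ordinal (leq_trans n_gt0 (leq_addr n n)).
have w_woman : w < n by [].
have phiw_man : phi w \in other_side w.
  case/matchingsP: phiM => phi_t _.
  by rewrite /other_side inE w_woman inE leqNgt phi_t w_woman.
have [m m_man m_top] := linear_order_top (p_prof w) phiw_man.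
move: m_man; rewrite /other_side inE w_woman inE => m_man.
have [muM mu_phi mu_w] := matching_conj_tperm phiM w_woman m_man.
exists (phi ^ tperm (phi w) m); rewrite in_invariant_optimal_matchings muM mu_phi /=.
apply/existsP => -[mu' /andP[_ /forallP impr]].
by have := impr w; rewrite mu_w (negbTE (m_top _)).
Qed.

End Matchings.

Theorem theorem6 (n : nat) (hn : 2 <= n) (phi : {perm agent n})
  (hphi : matching phi) :
  exists F : (agent n -> rel (agent n)) -> {set {perm agent n}},
    [/\ mechanism F, resolute F,
        mech_symmetric [set 1%g; phi] F & mech_weakly_pareto_optimal F].
Proof.
have phiM : phi \in matchings n by apply/matchingE.
pose F p := pick_set (invariant_optimal_matchings phi p).
have F_sub p : F p \subset matchings n :&: 'C[phi].
  exact: subset_trans (pick_set_sub _) (invariant_optimal_matchings_sub _ _).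
exists F; split.
- by move=> p _; apply: subset_trans (F_sub p) (subsetIl _ _).
- move=> p p_prof.
  have [mu mu_in] := invariant_optimal_matching_exists (ltnW hn) phiM p_prof.
  exact: card_pick_set mu_in.
- move=> p _ psi psi_in.
  have [b psi_b psi_phi] : exists2 b, shifts_sides b psi & commute psi phi.
    case/set2P: (psi_in) => ->.
      by exists false; [exact: shifts_sides1 | exact: commute_sym (commute1 _)].
    by exists true; [case/matchingsP: phiM | exact: commute_refl].
  rewrite /F (invariant_optimal_matchingsJ _ psi_b psi_phi).
  have sub_cent (A : {set {perm agent n}}) :
      A \subset matchings n :&: 'C[phi] -> A :^ psi = A.
    by move=> sA; apply: conjsg_centralised psi_in; apply: subset_trans sA (subsetIr _ _).
  by rewrite sub_cent ?invariant_optimal_matchings_sub // sub_cent ?F_sub.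
- move=> p _ mu /(subsetP (pick_set_sub _)).
  by rewrite in_invariant_optimal_matchings => /and3P[_ _ /weakly_pareto_optimalP].
Qed.
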